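(* Let $k$ be a field of characteristic $p>0$ and $A$ a $k$-vector space of dimension $1$. For every $r\ge0$, $S_{\le r}A\neq\bigoplus_{0\le i\le r}S^iA$.
   Context: $SA=\bigoplus_{n\ge0}S^nA$ is the symmetric algebra of $A$ ($S^0A=k$, $S^nA$ the $n$-th symmetric power, with pure symmetric tensors $a_1\otimes_s\dots\otimes_s a_n$). The linear map $\partial\colon SA\to SA\otimes A$ is given by $\partial(\lambda)=0$ for $\lambda\in S^0A$ and $\partial(a_1\otimes_s\dots\otimes_s a_n)=\sum_{i=1}^n(a_1\otimes_s\dots\otimes_s a_{i-1}\otimes_s a_{i+1}\otimes_s\dots\otimes_s a_n)\otimes a_i$. Iterates: $\partial^0=1_{SA}$ and $\partial^{r+1}:=\partial;(\partial^r\otimes 1_A)\colon SA\to SA\otimes A^{\otimes(r+1)}$. Define $S_{\le r}A:=\ker(\partial^{r+1})\subseteq SA$. *)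

From HB Require Import structures.
From mathcomp Require Import all_boot all_order all_algebra.
From mathcomp Require Import multinomials.mpoly.
Set Implicit Arguments. Unset Strict Implicit. Unset Printing Implicit Defensive.
Import GRing.Theory.
Local Open Scope ring_scope.

(* Concrete model of the symmetric algebra SA of a finite-dimensional
   k-vector space A: with e_0..e_{d-1} = vbasis {:A},
   SA = k[X_0,...,X_{d-1}], and a \in A is identified with
   sum_i coord_i(a) X_i; the symmetric product is polynomial product. *)
Section SymAlg.
Variables (k : fieldType) (A : vectType k).

Definition dimA : nat := \dim {:A}.

Definition SA := {mpoly k[dimA]}.

Definition symlin (a : A) : SA :=
  \sum_(i < dimA) coord (vbasis {:A}) i a *: 'X_i.

Definition spure n (t : n.-tuple A) : SA := \prod_(a <- t) symlin a.

Definition in_Sn (n : nat) (f : SA) : Prop :=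
  exists s : seq (k * n.-tuple A), f = \sum_(x <- s) x.1 *: spure x.2.

Definition in_Sle_sum (r : nat) (f : SA) : Prop :=
  exists g : 'I_r.+1 -> SA, (forall i : 'I_r.+1, in_Sn i (g i)) /\
                            f = \sum_(i < r.+1) g i.

(* An element of SA (x) A^{(x) m} is represented by its coordinates
   (in SA) along the basis e_{j_1} (x) ... (x) e_{j_m} of A^{(x) m}, i.e. by a
   function (m.-tuple 'I_dimA) -> SA.
   partial f = ∂ f : the coordinate of ∂ f along e_j is the partial
   derivative of f in X_j (this agrees with the defining formula on pure
   symmetric tensors). *)
Definition partial (f : SA) : 'I_dimA -> SA := fun j => mderiv j f.

(* dpow m f t = coordinate of ∂^m f along the basis tensor indexed by t,
   where ∂^{m+1} = ∂ ; (∂^m (x) 1_A): the head of t is the index of the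
   LAST tensor factor (the one produced by the first application of ∂). *)
Fixpoint dpow (m : nat) : SA -> m.-tuple 'I_dimA -> SA :=
  match m return SA -> m.-tuple 'I_dimA -> SA with
  | 0 => fun f _ => f
  | m'.+1 => fun f (t : m'.+1.-tuple 'I_dimA) =>
      @dpow m' (partial f (thead t)) (behead_tuple t)
  end.

(* f \in S_{<= r} A = ker ∂^{r+1} *)
Definition in_Sle (r : nat) (f : SA) : Prop :=
  forall t : (r.+1).-tuple 'I_dimA, @dpow r.+1 f t = 0.

End SymAlg.

(* In characteristic p the monomial X^(p(r+1)) has all partial derivatives
   equal to (p(r+1)) X^(p(r+1)-1) = 0, so it lies in ker ∂ ⊆ S_{<=r} A.  But it
   is homogeneous of degree p(r+1) > r, whereas every element of
   S^0 A ⊕ ... ⊕ S^r A only has monomials of degree at most r. *)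
From HB Require Import structures.
From mathcomp Require Import all_boot all_order all_algebra.
From mathcomp Require Import multinomials.mpoly.
Set Implicit Arguments. Unset Strict Implicit. Unset Printing Implicit Defensive.
Local Open Scope ring_scope.
Import GRing.Theory.

Section SymmetricPowers.
Variables (k : fieldType) (A : vectType k).

Lemma symlin_homog (a : A) : symlin a \is 1%N.-homog.
Proof.
apply: rpred_sum => i _; apply: rpredZ.
by rewrite dhomogX; apply/eqP/mdeg1.
Qed.

Lemma prod_symlin_homog (s : seq A) :
  \prod_(a <- s) symlin a \is (size s).-homog.
Proof.
elim: s => [|a s IH]; first by rewrite big_nil dhomog1.
by rewrite big_cons /= -add1n; apply: dhomogM; [apply: symlin_homog | exact: IH].
Qed.

Lemma spure_homog n (t : n.-tuple A) : spure t \is n.-homog.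
Proof. by rewrite -{2}(size_tuple t); apply: prod_symlin_homog. Qed.

Lemma in_Sn_homog n (f : SA A) : in_Sn n f -> f \is n.-homog.
Proof.
by case=> s ->; apply: rpred_sum => x _; apply/rpredZ/spure_homog.
Qed.

Lemma in_Sle_sum_mcoeff r (f : SA A) m :
  in_Sle_sum r f -> (r < mdeg m)%N -> f@_m = 0.
Proof.
case=> g [Sg ->] r_lt_m; rewrite raddf_sum big1 // => i _.
apply: (dhomog_nemf_coeff (in_Sn_homog (Sg i))).
by rewrite neq_ltn (leq_trans (ltn_ord i)) ?orbT.
Qed.

Lemma dpow0 m (t : m.-tuple 'I_(dimA A)) : dpow 0 t = 0.
Proof. by elim: m t => [|m IH] t //=; rewrite /partial mderiv0 IH. Qed.

Lemma in_Sle_of_partial_eq0 r (f : SA A) :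
  (forall j, partial f j = 0) -> in_Sle r f.
Proof. by move=> df0 t /=; rewrite df0 dpow0. Qed.

Lemma partial_X_pchar p n (i j : 'I_(dimA A)) : p \in [pchar k] ->
  partial ('X_[U_(i) *+ (p * n)] : SA A) j = 0.
Proof.
move=> pchar_p; rewrite /partial mderivX.
have /eqP -> : ((U_(i) *+ (p * n))%MM j)%:R == 0 :> k.
  by rewrite -(dvdn_pcharf pchar_p) mulmnE dvdn_mull // dvdn_mulr.
by rewrite scale0r.
Qed.

End SymmetricPowers.

Theorem proposition7p4 (k : fieldType) (p : nat) (hp : p \in [pchar k])
  (A : vectType k) (hA : \dim {:A} = 1%N) (r : nat) :
  ~ (forall f : SA A, in_Sle r f <-> in_Sle_sum r f).
Proof.
pose i0 : 'I_(dimA A) := cast_ord (esym hA) ord0.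
pose m := (U_(i0) *+ (p * r.+1))%MM.
move=> /(_ 'X_[m]) [Xm_sum _].
have Xm_Sle : in_Sle r ('X_[m] : SA A).
  by apply: in_Sle_of_partial_eq0 => j; apply: partial_X_pchar.
have r_lt_m : (r < mdeg m)%N.
  by rewrite mdegMn mdeg1 mul1n leq_pmull ?prime_gt0 ?(pcharf_prime hp).
have /eqP := in_Sle_sum_mcoeff (Xm_sum Xm_Sle) r_lt_m.
by rewrite mcoeffX eqxx oner_eq0.
Qed.
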